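(* For all real $y$, $$\sum_{k=0}^{4}g_{5k}^2(y)=\frac15e^{2y}+\frac25e^{(\sqrt5-1)y/2}+\frac25e^{-(\sqrt5+1)y/2}.$$
   Context: The polar 5-dimensional cosexponential functions are $g_{5k}(y)=\sum_{p=0}^\infty \frac{y^{k+5p}}{(k+5p)!}$ for $k=0,\dots,4$ and real $y$. *)

From Stdlib Require Import Reals.
From Coquelicot Require Import Coquelicot.
Open Scope R_scope.

Definition g5 (k : nat) (y : R) : R :=
  Series (fun p : nat => y ^ (k + 5 * p) / INR (Factorial.fact (k + 5 * p))).

From Stdlib Require Import Reals Lia Lra.
From Coquelicot Require Import Coquelicot.
Open Scope R_scope.

(* Each [g_{5k}] is an entire power series, and differentiation permutes them
   cyclically: [g_{5k}' = g_{5(k-1)}], indices mod 5.  For the quadratic forms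
   [S0 = sum g_k^2], [S1 = sum g_k g_{k+1}], [S2 = sum g_k g_{k+2}] this gives
   [S0' = 2 S1], [S1' = S0 + S2], [S2' = S1 + S2].  So whenever
   [l^3 - l^2 - 3 l + 2 = (l - 2) (l^2 + l - 1) = 0], the combination
   [S0 + l S1 + (l^2 - 2) S2] satisfies [E' = l E] and [E 0 = 1], hence equals
   [exp (l y)].  Adding the combination for [l = 2] to twice those for the
   roots [(sqrt 5 - 1) / 2] and [- (sqrt 5 + 1) / 2] of [l^2 + l - 1] cancels
   [S1] and [S2] and leaves [5 S0]. *)

Definition cosexp (m k : nat) (y : R) : R :=
  Series (fun p => y ^ (k + m * p) / INR (Factorial.fact (k + m * p))).

Definition cosexp_coef (m k n : nat) : R :=
  if n mod m =? k then / INR (Factorial.fact n) else 0.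

Lemma CV_radius_gt_of_CV_disk (a : nat -> R) :
  (forall x, CV_disk a x) -> forall x, Rbar_lt (Rabs x) (CV_radius a).
Proof.
  intros Ha x.
  apply Rbar_lt_le_trans with (Rabs x + 1); [simpl; lra |].
  apply (proj1 (Lub_Rbar_correct _)), Ha.
Qed.

Lemma Rabs_cosexp_coef_le m k n :
  Rabs (cosexp_coef m k n) <= / INR (Factorial.fact n).
Proof.
  pose proof (Rinv_0_lt_compat _ (INR_fact_lt_0 n)) as inv_fact_pos.
  unfold cosexp_coef; destruct (_ =? _).
  - rewrite Rabs_right; lra.
  - rewrite Rabs_R0; lra.
Qed.

Lemma CV_disk_cosexp_coef m k x : CV_disk (cosexp_coef m k) x.
Proof.
  apply (@ex_series_le R_AbsRing R_CompleteNormedModule _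
           (fun n => / INR (Factorial.fact n) * Rabs x ^ n)).
  - intros n. unfold norm; simpl; unfold abs; simpl.
    rewrite Rabs_Rabsolu, Rabs_mult, <- RPow_abs.
    apply Rmult_le_compat_r; [apply pow_le, Rabs_pos | apply Rabs_cosexp_coef_le].
  - exists (exp (Rabs x)).
    eapply is_series_ext; [| exact (is_exp_Reals (Rabs x))].
    intros n. unfold scal; simpl; unfold mult; simpl.
    rewrite pow_n_pow. ring.
Qed.

Lemma succ_mod_eqb m n k :
  (k < m)%nat -> (S n mod m =? S k mod m) = (n mod m =? k).
Proof.
  intros Hk.
  assert (succ_mod : forall i, (i < m)%nat ->
            S i mod m = (if S i =? m then 0 else S i)%nat).
  { intros i Hi. destruct (Nat.eqb_spec (S i) m) as [<- | Hne].
    - apply Nat.Div0.mod_same.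
    - apply Nat.mod_small. lia. }
  assert (Hr : (n mod m < m)%nat) by (apply Nat.mod_upper_bound; lia).
  rewrite <- Nat.add_1_r, <- Nat.Div0.add_mod_idemp_l, Nat.add_1_r.
  rewrite (succ_mod _ Hr), (succ_mod _ Hk).
  apply Bool.eq_true_iff_eq. rewrite !Nat.eqb_eq.
  destruct (Nat.eqb_spec (S (n mod m)) m), (Nat.eqb_spec (S k) m); lia.
Qed.

Lemma PS_derive_cosexp_coef m k n :
  (k < m)%nat -> PS_derive (cosexp_coef m (S k mod m)) n = cosexp_coef m k n.
Proof.
  intros Hk. unfold PS_derive, cosexp_coef.
  rewrite succ_mod_eqb by exact Hk.
  destruct (_ =? _); [| ring].
  rewrite fact_simpl, mult_INR. field.
  split; [apply INR_fact_neq_0 | apply not_0_INR; lia].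
Qed.

Lemma cosexp_coef_lt m k n :
  (k < m)%nat -> (n < k)%nat -> cosexp_coef m k n = 0.
Proof.
  intros Hk Hn. unfold cosexp_coef.
  rewrite Nat.mod_small by lia.
  destruct (Nat.eqb_spec n k); [lia | reflexivity].
Qed.

Lemma cosexp_coef_on m k p :
  (k < m)%nat -> cosexp_coef m k (k + m * p) = / INR (Factorial.fact (k + m * p)).
Proof.
  intros Hk. unfold cosexp_coef.
  replace (k + m * p)%nat with (k + p * m)%nat at 1 by lia.
  rewrite Nat.Div0.mod_add, Nat.mod_small, Nat.eqb_refl by exact Hk.
  reflexivity.
Qed.

Lemma cosexp_coef_off m k p j :
  (k < m)%nat -> (0 < j < m)%nat -> cosexp_coef m k (k + m * p + j) = 0.
Proof.
  intros Hk Hj. unfold cosexp_coef.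
  replace (k + m * p + j)%nat with (k + j + p * m)%nat by lia.
  rewrite Nat.Div0.mod_add.
  destruct (Nat.lt_ge_cases (k + j) m).
  - rewrite Nat.mod_small by lia.
    destruct (Nat.eqb_spec (k + j) k); [lia | reflexivity].
  - replace (k + j)%nat with (k + j - m + 1 * m)%nat by lia.
    rewrite Nat.Div0.mod_add, Nat.mod_small by lia.
    destruct (Nat.eqb_spec (k + j - m) k); [lia | reflexivity].
Qed.

Section PartialSums.

Variables (m k : nat) (y : R).
Hypothesis k_lt_m : (k < m)%nat.

Let term (n : nat) : R := y ^ n * cosexp_coef m k n.
Let cosexp_term (p : nat) : R :=
  y ^ (k + m * p) / INR (Factorial.fact (k + m * p)).

Lemma sum_cosexp_coef_lt n : (n < k)%nat -> sum_f_R0 term n = 0.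
Proof.
  induction n as [| n IH]; intros Hn; simpl.
  - unfold term. rewrite cosexp_coef_lt by lia. ring.
  - rewrite IH by lia. unfold term. rewrite cosexp_coef_lt by lia. ring.
Qed.

Lemma sum_cosexp_coef_block p j :
  sum_f_R0 term (k + m * p) = sum_f_R0 cosexp_term p -> (j < m)%nat ->
  sum_f_R0 term (k + m * p + j) = sum_f_R0 cosexp_term p.
Proof.
  intros Hp. induction j as [| j IH]; intros Hj.
  - rewrite Nat.add_0_r. exact Hp.
  - rewrite Nat.add_succ_r, tech5, IH by lia. unfold term.
    rewrite <- Nat.add_succ_r, cosexp_coef_off by lia. ring.
Qed.

Lemma sum_cosexp_coef p :
  sum_f_R0 term (k + m * p) = sum_f_R0 cosexp_term p.
Proof.
  induction p as [| p IH].
  - assert (sum_first : sum_f_R0 term k = term k).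
    { destruct (Nat.eq_0_gt_0_cases k) as [k0 | k_pos].
      - rewrite k0. reflexivity.
      - replace k with (S (pred k)) at 1 by lia.
        rewrite tech5, sum_cosexp_coef_lt by lia.
        replace (S (pred k)) with k by lia. ring. }
    rewrite Nat.mul_0_r, Nat.add_0_r, sum_first. cbn [sum_f_R0].
    unfold term, cosexp_term, cosexp_coef.
    rewrite Nat.mul_0_r, Nat.add_0_r, Nat.mod_small, Nat.eqb_refl by exact k_lt_m.
    unfold Rdiv. ring.
  - replace (k + m * S p)%nat with (S (k + m * p + (m - 1))) by lia.
    rewrite tech5, (sum_cosexp_coef_block p (m - 1) IH) by lia.
    replace (S (k + m * p + (m - 1))) with (k + m * S p)%nat by lia.
    rewrite tech5. unfold term, cosexp_term.
    rewrite cosexp_coef_on by exact k_lt_m. unfold Rdiv. ring.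
Qed.

End PartialSums.

Lemma cosexp_PSeries m k y :
  (k < m)%nat -> cosexp m k y = PSeries (cosexp_coef m k) y.
Proof.
  intros Hk. apply is_series_unique.
  assert (H : is_pseries (cosexp_coef m k) y (PSeries (cosexp_coef m k) y))
    by apply PSeries_correct, CV_disk_correct, CV_disk_cosexp_coef.
  eapply filterlim_ext;
    [| eapply filterlim_comp;
       [apply (eventually_subseq (fun p => k + m * p)%nat) | exact H]].
  - intros p. simpl. rewrite !sum_n_Reals, <- sum_cosexp_coef by exact Hk.
    apply sum_eq. intros i _. unfold scal; simpl; unfold mult; simpl.
    rewrite pow_n_pow. ring.
  - intros p. lia.
Qed.

Lemma is_derive_cosexp m k y :
  (k < m)%nat -> is_derive (cosexp m (S k mod m)) y (cosexp m k y).
Proof.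
  intros Hk.
  assert (Hsk : (S k mod m < m)%nat) by (apply Nat.mod_upper_bound; lia).
  apply (is_derive_ext (PSeries (cosexp_coef m (S k mod m)))).
  { intros t. symmetry. apply cosexp_PSeries, Hsk. }
  rewrite cosexp_PSeries by exact Hk.
  replace (PSeries (cosexp_coef m k) y)
    with (PSeries (PS_derive (cosexp_coef m (S k mod m))) y)
    by (apply PSeries_ext; intros n; apply PS_derive_cosexp_coef, Hk).
  apply is_derive_PSeries, CV_radius_gt_of_CV_disk, CV_disk_cosexp_coef.
Qed.

Lemma cosexp_at_0 m k :
  (k < m)%nat -> cosexp m k 0 = if k =? 0 then 1 else 0.
Proof.
  intros Hk. rewrite cosexp_PSeries, PSeries_0 by exact Hk.
  unfold cosexp_coef. rewrite Nat.Div0.mod_0_l, Nat.eqb_sym.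
  destruct (k =? 0); [apply Rinv_1 | reflexivity].
Qed.

(* [f y * exp (- c y)] has zero derivative, hence is constant. *)
Lemma eq_exp_of_is_derive_scal (f : R -> R) (c : R) :
  (forall y, is_derive f y (c * f y)) -> forall y, f y = f 0 * exp (c * y).
Proof.
  intros Hf y.
  set (h := fun t => f t * exp (- c * t)).
  assert (h' : forall t, is_derive h t 0).
  { intros t. unfold h.
    assert (He : is_derive (fun t => exp (- c * t)) t (- c * exp (- c * t)))
      by (auto_derive; [exact I | ring]).
    replace 0 with (c * f t * exp (- c * t) + f t * (- c * exp (- c * t))) by ring.
    exact (is_derive_mult _ _ t _ _ (Hf t) He Rmult_comm). }
  destruct (MVT_cor4 h (fun _ => 0) 0 (Rabs (y - 0))) with (b := y)
    as [x [Hx _]]; [intros t _; apply h' | lra |].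
  unfold h in Hx.
  rewrite Rmult_0_l, Rmult_0_r, exp_0 in Hx.
  replace (f y) with (f y * exp (- c * y) * exp (c * y)).
  - replace (f y * exp (- c * y)) with (f 0) by lra. reflexivity.
  - rewrite Rmult_assoc, <- exp_plus.
    replace (- c * y + c * y) with 0 by ring. rewrite exp_0. ring.
Qed.

Lemma golden_cubic l : l ^ 2 + l - 1 = 0 -> l ^ 3 - l ^ 2 - 3 * l + 2 = 0.
Proof.
  intros Hl.
  replace (l ^ 3 - l ^ 2 - 3 * l + 2) with ((l - 2) * (l ^ 2 + l - 1)) by ring.
  rewrite Hl. ring.
Qed.

Section CyclicSystem.

Variables f0 f1 f2 f3 f4 : R -> R.
Hypotheses (f0' : forall y, is_derive f0 y (f4 y))
           (f1' : forall y, is_derive f1 y (f0 y))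
           (f2' : forall y, is_derive f2 y (f1 y))
           (f3' : forall y, is_derive f3 y (f2 y))
           (f4' : forall y, is_derive f4 y (f3 y)).
Hypotheses (f0_0 : f0 0 = 1) (f1_0 : f1 0 = 0) (f2_0 : f2 0 = 0)
           (f3_0 : f3 0 = 0) (f4_0 : f4 0 = 0).

Let Derive_f0 y : Derive f0 y = f4 y. Proof. exact (is_derive_unique _ _ _ (f0' y)). Qed.
Let Derive_f1 y : Derive f1 y = f0 y. Proof. exact (is_derive_unique _ _ _ (f1' y)). Qed.
Let Derive_f2 y : Derive f2 y = f1 y. Proof. exact (is_derive_unique _ _ _ (f2' y)). Qed.
Let Derive_f3 y : Derive f3 y = f2 y. Proof. exact (is_derive_unique _ _ _ (f3' y)). Qed.
Let Derive_f4 y : Derive f4 y = f3 y. Proof. exact (is_derive_unique _ _ _ (f4' y)). Qed.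

Definition sum_sq (y : R) : R :=
  f0 y ^ 2 + f1 y ^ 2 + f2 y ^ 2 + f3 y ^ 2 + f4 y ^ 2.
Definition sum_adj (y : R) : R :=
  f0 y * f1 y + f1 y * f2 y + f2 y * f3 y + f3 y * f4 y + f4 y * f0 y.
Definition sum_skip (y : R) : R :=
  f0 y * f2 y + f1 y * f3 y + f2 y * f4 y + f3 y * f0 y + f4 y * f1 y.

Lemma is_derive_sum_sq y : is_derive sum_sq y (2 * sum_adj y).
Proof.
  unfold sum_sq, sum_adj. auto_derive; [repeat split; eexists; eauto |].
  rewrite Derive_f0, Derive_f1, Derive_f2, Derive_f3, Derive_f4. ring.
Qed.

Lemma is_derive_sum_adj y : is_derive sum_adj y (sum_sq y + sum_skip y).
Proof.
  unfold sum_sq, sum_adj, sum_skip. auto_derive; [repeat split; eexists; eauto |].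
  rewrite Derive_f0, Derive_f1, Derive_f2, Derive_f3, Derive_f4. ring.
Qed.

Lemma is_derive_sum_skip y : is_derive sum_skip y (sum_adj y + sum_skip y).
Proof.
  unfold sum_adj, sum_skip. auto_derive; [repeat split; eexists; eauto |].
  rewrite Derive_f0, Derive_f1, Derive_f2, Derive_f3, Derive_f4. ring.
Qed.

Definition energy (l y : R) : R :=
  sum_sq y + l * sum_adj y + (l ^ 2 - 2) * sum_skip y.

Lemma is_derive_energy l y :
  l ^ 3 - l ^ 2 - 3 * l + 2 = 0 -> is_derive (energy l) y (l * energy l y).
Proof.
  intros Hl.
  assert (eigen : 2 * sum_adj y + l * (sum_sq y + sum_skip y)
                  + (l ^ 2 - 2) * (sum_adj y + sum_skip y) = l * energy l y).
  { transitivity (l * energy l y - (l ^ 3 - l ^ 2 - 3 * l + 2) * sum_skip y);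
      [unfold energy; ring | rewrite Hl; ring]. }
  rewrite <- eigen. unfold energy.
  apply (@is_derive_plus R_AbsRing R_NormedModule);
    [apply (@is_derive_plus R_AbsRing R_NormedModule) |].
  - apply is_derive_sum_sq.
  - apply is_derive_scal, is_derive_sum_adj.
  - apply is_derive_scal, is_derive_sum_skip.
Qed.

Lemma energy_exp l y :
  l ^ 3 - l ^ 2 - 3 * l + 2 = 0 -> energy l y = exp (l * y).
Proof.
  intros Hl.
  rewrite (eq_exp_of_is_derive_scal (energy l) l (fun t => is_derive_energy l t Hl) y).
  unfold energy, sum_sq, sum_adj, sum_skip.
  rewrite f0_0, f1_0, f2_0, f3_0, f4_0. ring.
Qed.

Lemma sum_sq_exp y :
  sum_sq y = / 5 * exp (2 * y)
             + 2 / 5 * exp ((sqrt 5 - 1) * y / 2)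
             + 2 / 5 * exp (- ((sqrt 5 + 1) * y / 2)).
Proof.
  assert (sqrt5_sq : sqrt 5 * sqrt 5 = 5) by (apply sqrt_sqrt; lra).
  set (a := (sqrt 5 - 1) / 2).
  assert (golden : a ^ 2 + a - 1 = 0) by (unfold a; nra).
  replace ((sqrt 5 - 1) * y / 2) with (a * y) by (unfold a; field).
  replace (- ((sqrt 5 + 1) * y / 2)) with ((-1 - a) * y) by (unfold a; field).
  rewrite <- (energy_exp 2 y) by ring.
  rewrite <- (energy_exp a y) by (apply golden_cubic, golden).
  rewrite <- (energy_exp (-1 - a) y) by (apply golden_cubic; nra).
  unfold energy.
  transitivity (sum_sq y + 4 / 5 * (a ^ 2 + a - 1) * sum_skip y);
    [rewrite golden; ring | field].
Qed.

End CyclicSystem.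

Theorem mainTheorem4 : forall y : R,
  sum_f_R0 (fun k => (g5 k y) ^ 2) 4 =
    / 5 * exp (2 * y)
    + 2 / 5 * exp ((sqrt 5 - 1) * y / 2)
    + 2 / 5 * exp (- ((sqrt 5 + 1) * y / 2)).
Proof.
  intros y.
  exact (sum_sq_exp (cosexp 5 0) (cosexp 5 1) (cosexp 5 2) (cosexp 5 3) (cosexp 5 4)
    (fun t => is_derive_cosexp 5 4 t ltac:(lia))
    (fun t => is_derive_cosexp 5 0 t ltac:(lia))
    (fun t => is_derive_cosexp 5 1 t ltac:(lia))
    (fun t => is_derive_cosexp 5 2 t ltac:(lia))
    (fun t => is_derive_cosexp 5 3 t ltac:(lia))
    (cosexp_at_0 5 0 ltac:(lia)) (cosexp_at_0 5 1 ltac:(lia))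
    (cosexp_at_0 5 2 ltac:(lia)) (cosexp_at_0 5 3 ltac:(lia))
    (cosexp_at_0 5 4 ltac:(lia)) y).
Qed.
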